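(* Let $G$ be a group and $\mathcal{S}$ a 2-complex with vertices in $G$ such that $\mathcal{C}=Sc[\mathcal{S},G]$ is a commutative triplet structure. For every vertex $v\in G\times\mathcal{T}$, the map $E$ restricts to a bijection from the neighbor set $\Gamma_{G_{zig}}(v)$ onto the neighbor set $\Gamma_{G_{walk}(\mathcal{C})}(E(v))$.
   Context: For a 2-complex $X$, $X(1)$ is the set of 2-sets in triangles; $G_{walk}(X)$ is the graph on $X(1)$ with distinct edges adjacent iff they lie in a common triangle. For $\sigma\subseteq G$, $\sigma\cdot g=\{sg:s\in\sigma\}$; $Sc[\mathcal{S},G]=\{\sigma\cdot g\}$. $\mathcal{T}=\mathcal{S}(1)$, $\mathcal{T}_o$ = ordered pairs $(t_1,t_2)$ with $\{t_1,t_2\}\in\mathcal{T}$. Commutative triplet structure: (0) $\{s,s^{-1}\}\notin\mathcal{T}$ for every vertex $s$; (A) every edge of $\mathcal{T}$ lies in exactly $\tilde d$ triangles of $\mathcal{S}$; (B) $ab=ba$ for $\{a,b\}\in\mathcal{T}$; (C) $\{a,b\}\in\mathcal{T}\iff\{a^{-1},b^{-1}\}\in\mathcal{T}$; (D) for $t\ne t'\in\mathcal{T}_o$, $t_1t_2^{-1}=t'_1(t'_2)^{-1}$ implies $t'_2=t_1^{-1}$, $t'_1=t_2^{-1}$; (E) the 1-skeleton of $\mathcal{S}$ is connected. For $\tau=\{a,b\}$: $E(g,\tau)=\{ag,bg\}$, $\hat\tau g=abg$, $\tau^{-1}=\{a^{-1},b^{-1}\}$. $L=G_{walk}(\mathcal{S})$.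 On $G\times\mathcal{T}$, red edges join $(g,\tau)$ and $(g,\tau')$ when $\tau\sim\tau'$ in $L$; the blue edge joins $(g,\tau)$ and $(\hat\tau g,\tau^{-1})$. $G_{zig}$ is the graph on $G\times\mathcal{T}$ induced by the operator $\tfrac12P_R+\tfrac12P_RP_B$ ($P_R,P_B$ the normalized red/blue adjacency matrices): the neighbors of $v$ are its red neighbors and the red neighbors of its blue neighbor. *)

From HB Require Import structures.
From mathcomp Require Import all_boot.
From mathcomp Require Import finmap.
From Stdlib Require Import Relations.

Set Implicit Arguments.
Unset Strict Implicit.
Unset Printing Implicit Defensive.

Local Open Scope fset_scope.
Local Open Scope group_scope.

Section Defs.
Variable G : groupType.

(* A (pure) 2-complex with vertices in G, given by its finite set of
   triangles; every triangle is a 3-subset of G. *)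
Definition is_2complex (S : {fset {fset G}}) : Prop :=
  forall t, t \in S -> #|` t| = 3.

Definition edges_of (X : {fset G} -> Prop) (e : {fset G}) : Prop :=
  #|` e| = 2 /\ exists t, X t /\ e `<=` t.

Definition walk_adj (X : {fset G} -> Prop) (e e' : {fset G}) : Prop :=
  [/\ edges_of X e, edges_of X e', e <> e' &
      exists t, X t /\ e `|` e' `<=` t].

Definition trianglesS (S : {fset {fset G}}) : {fset G} -> Prop :=
  fun t => t \in S.

Definition TT (S : {fset {fset G}}) : {fset G} -> Prop := edges_of (trianglesS S).

Definition rtrans (sigma : {fset G}) (g : G) : {fset G} :=
  (fun s => s * g) @` sigma.

Definition Sc (S : {fset {fset G}}) : {fset G} -> Prop :=
  fun t => exists sigma g, sigma \in S /\ t = rtrans sigma g.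

Definition edge_inv (tau : {fset G}) : {fset G} := (fun x => x^-1) @` tau.

(* hat tau = a b, where tau = {a, b}  (with a, b listed in the enumeration
   order of the finite set; by (B) the order is irrelevant) *)
Definition edge_hat (tau : {fset G}) : G :=
  nth 1 (tau : seq G) 0 * nth 1 (tau : seq G) 1.

Definition Emap (v : G * {fset G}) : {fset G} := rtrans v.2 v.1.

(* Commutative triplet structure (conditions (0), (A)-(E)) *)
Definition comm_triplet_structure (S : {fset {fset G}}) : Prop :=
  [/\ (* (0) *) forall s : G, ~ TT S [fset s; s^-1],
      (* (A) *) exists dt : nat, forall e, TT S e ->
                  #|` [fset t in S | e `<=` t]| = dt,
      (* (B) *) forall a b : G, TT S [fset a; b] -> a * b = b * a,
      (* (C) *) forall a b : G, TT S [fset a; b] <-> TT S [fset a^-1; b^-1] &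
      (* (D) *) (forall t1 t2 u1 u2 : G,
                  TT S [fset t1; t2] -> TT S [fset u1; u2] ->
                  (t1, t2) <> (u1, u2) ->
                  t1 * t2^-1 = u1 * u2^-1 -> u2 = t1^-1 /\ u1 = t2^-1)]
  /\ (* (E) *) forall x y : G,
                  (exists t, t \in S /\ x \in t) -> (exists t, t \in S /\ y \in t) ->
                  clos_refl_trans G (fun a b => TT S [fset a; b]) x y.

Definition Ladj (S : {fset {fset G}}) : {fset G} -> {fset G} -> Prop :=
  walk_adj (trianglesS S).

(* neighbours of v = (g, tau) in G_zig: its red neighbours (g, tau') with
   tau ~ tau' in L, and the red neighbours (hat tau g, tau'') with
   tau'' ~ tau^{-1} in L of its blue neighbour (hat tau g, tau^{-1}). *)
Definition zig_nbr (S : {fset {fset G}}) (v w : G * {fset G}) : Prop :=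
  (w.1 = v.1 /\ Ladj S v.2 w.2) \/
  (w.1 = edge_hat v.2 * v.1 /\ Ladj S (edge_inv v.2) w.2).

End Defs.

(* Right translation by g carries the link L = G_walk(S) into G_walk(C), and
   E(g, tau) = tau g.  A red neighbour (g, tau') of v = (g, {a,b}) is sent to
   tau' g, and a blue-red neighbour (a b g, tau'') to tau'' a b g; since
   a b = b a we have {a^-1, b^-1} a b = {a, b}, so both are walk-neighbours of
   {a g, b g}.  The key rigidity fact is that, by (D), if {a, b} and
   {a k, b k} are both edges of S then k = 1 or k = (b a)^-1.  A triangle
   sigma h of C containing {a g, b g} makes {a, b} g h^-1 an edge of S, so
   g h^-1 is 1 (a red neighbour) or (b a)^-1 (a blue-red neighbour): this is
   surjectivity.  Injectivity across the two kinds fails only if a red and a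
   blue-red neighbour have the same image; then for a vertex c of tau' outside
   {a, b}, both {a, c} and {a, c} (a b)^-1 are edges, forcing a b = 1, against
   (0), or a b = c a = a c, i.e. c = b. *)
From HB Require Import structures.
From mathcomp Require Import all_boot.
From mathcomp Require Import finmap.

Set Implicit Arguments.
Unset Strict Implicit.
Unset Printing Implicit Defensive.

Local Open Scope fset_scope.
Local Open Scope group_scope.

Section RightTranslation.
Variable G : groupType.
Implicit Types (s t : {fset G}) (g h a b : G).

Lemma mem_rtrans s g x : (x \in rtrans s g) = (x * g^-1 \in s).
Proof.
apply/imfsetP/idP => [[y ys ->]|xs]; first by rewrite mulgK.
by exists (x * g^-1) => //; rewrite mulgVK.
Qed.

Lemma rtransM s g h : rtrans (rtrans s g) h = rtrans s (g * h).
Proof. by apply/fsetP => x; rewrite !mem_rtrans invgM mulgA. Qed.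

Lemma rtrans1 s : rtrans s 1 = s.
Proof. by apply/fsetP => x; rewrite mem_rtrans invg1 mulg1. Qed.

Lemma rtransK g : cancel (fun s => rtrans s g) (fun s => rtrans s g^-1).
Proof. by move=> s; rewrite rtransM mulgV rtrans1. Qed.

Lemma rtrans_inj g : injective (fun s => rtrans s g).
Proof. exact: can_inj (rtransK g). Qed.

Lemma fsubset_rtrans s t g : (rtrans s g `<=` rtrans t g) = (s `<=` t).
Proof.
apply/fsubsetP/fsubsetP => sub x; last by rewrite !mem_rtrans; apply: sub.
by have := sub (x * g); rewrite !mem_rtrans mulgK; apply.
Qed.

Lemma rtransU s t g : rtrans (s `|` t) g = rtrans s g `|` rtrans t g.
Proof. by apply/fsetP => x; rewrite in_fsetU !mem_rtrans in_fsetU. Qed.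

Lemma rtrans_fset2 a b g : rtrans [fset a; b] g = [fset a * g; b * g].
Proof. by apply/fsetP => x; rewrite mem_rtrans !in_fset2 !divg_eq. Qed.

Lemma card_rtrans s g : #|` rtrans s g| = #|` s|.
Proof. by apply/eqP/card_in_imfsetP => x y _ _; apply: mulIg. Qed.

Lemma edge_inv_fset2 a b : edge_inv [fset a; b] = [fset a^-1; b^-1].
Proof.
apply/fsetP => x; apply/imfsetP/fset2P => [[y /fset2P[] -> ->]|[] ->];
  by [left | right | exists a; rewrite ?fset21 | exists b; rewrite ?fset22].
Qed.

Lemma edge_hat_fset2 a b : a != b -> a * b = b * a -> edge_hat [fset a; b] = a * b.
Proof.
move=> neq_ab comm_ab; rewrite /edge_hat.
have mem_a : a \in enum_fset [fset a; b] := fset21 a b.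
have mem_b : b \in enum_fset [fset a; b] := fset22 a b.
have : size (enum_fset [fset a; b]) = 2 by rewrite cardfs2 neq_ab.
move: mem_a mem_b (fset_uniq [fset a; b]).
case: (enum_fset _) => [|x [|y []]] //= + + + _; rewrite !inE.
by case/orP=> /eqP ?; case/orP=> /eqP ?; subst; rewrite ?comm_ab ?eqxx in neq_ab *.
Qed.

Lemma rtrans_fset2_inv_hat a b :
  a * b = b * a -> rtrans [fset a^-1; b^-1] (a * b) = [fset a; b].
Proof. by move=> comm_ab; rewrite rtrans_fset2 mulKg comm_ab mulKg fsetUC. Qed.

Lemma fset_card2 (e : {fset G}) : #|` e| = 2 -> exists a b, e = [fset a; b].
Proof.
move=> card_e; have /fset0Pn [a ae] : e != fset0 by rewrite -cardfs_eq0 card_e.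
have := cardfsD1 a e; rewrite ae card_e => -[] /esym /eqP /cardfs1P [b Eb].
by exists a, b; rewrite -Eb fsetD1K.
Qed.

End RightTranslation.

Section CommutativeTripletStructure.
Variables (G : groupType) (S : {fset {fset G}}).
Implicit Types (e t : {fset G}) (g h a b c k : G).

Hypothesis no_inverse_edge : forall s : G, ~ TT S [fset s; s^-1].
Hypothesis edge_commute : forall a b, TT S [fset a; b] -> a * b = b * a.
Hypothesis edge_quotient_rigid : forall t1 t2 u1 u2 : G,
  TT S [fset t1; t2] -> TT S [fset u1; u2] -> (t1, t2) <> (u1, u2) ->
  t1 * t2^-1 = u1 * u2^-1 -> u2 = t1^-1 /\ u1 = t2^-1.

Lemma edges_of_Sc_rtrans e g : TT S e -> edges_of (Sc S) (rtrans e g).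
Proof.
case=> card_e [t [tS sub]]; split; first by rewrite card_rtrans.
by exists (rtrans t g); split; [exists t, g | rewrite fsubset_rtrans].
Qed.

Lemma walk_adj_Sc_rtrans e e' g :
  Ladj S e e' -> walk_adj (Sc S) (rtrans e g) (rtrans e' g).
Proof.
case=> Ee Ee' neq [t [tS sub]]; split; try exact: edges_of_Sc_rtrans.
  by move/rtrans_inj.
by exists (rtrans t g); split; [exists t, g | rewrite -rtransU fsubset_rtrans].
Qed.

Lemma walk_adj_Sc_untranslate e e' :
  walk_adj (Sc S) e e' -> exists h, Ladj S (rtrans e h) (rtrans e' h).
Proof.
case=> -[card_e _] [card_e' _] neq [_ [[s [h [sS ->]]] sub]].
have : rtrans (e `|` e') h^-1 `<=` s by rewrite -(rtransK h s) fsubset_rtrans.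
rewrite rtransU => sub'; have /fsubUsetP [sub_e sub_e'] := sub'.
exists h^-1; split; try by move/rtrans_inj.
- by split; [rewrite card_rtrans | exists s].
- by split; [rewrite card_rtrans | exists s].
- by exists s.
Qed.

Lemma edge_shift_cases a b k :
  TT S [fset a; b] -> TT S [fset a * k; b * k] -> k = 1 \/ k = (b * a)^-1.
Proof.
move=> Eab Eabk; have [[eq_ak _]|neq] := eqVneq (a * k, b * k) (a, b).
  by left; apply: (mulgI a); rewrite mulg1.
right; have quot : (a * k) * (b * k)^-1 = a * b^-1 by rewrite invgM mulgA mulgK.
have [-> _] := edge_quotient_rigid Eabk Eab (elimN eqP neq) quot.
by rewrite invgM invgK mulKg.
Qed.

Lemma red_blue_images_disjoint a b t1 t2 :
  TT S [fset a; b] -> Ladj S [fset a; b] t1 -> Ladj S [fset a^-1; b^-1] t2 ->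
  t1 <> rtrans t2 (a * b).
Proof.
move=> Eab [_ [card_t1 _] neq [t [tS sub]]] [_ _ _ [t' [t'S sub']]] Et1.
have [c t1c cNab] : exists2 c, c \in t1 & c \notin [fset a; b].
  apply/fsubsetPn/negP => sub_t1; apply: neq; apply/esym/eqP.
  by rewrite eqEfcard sub_t1 cardfs2 card_t1; case: (a != b).
have Eac : TT S [fset a; c].
  split; first by rewrite cardfs2; case: eqP cNab => // <-; rewrite fset21.
  exists t; split => //; apply: fsubset_trans sub; apply/fsubsetP => x.
  by case/fset2P=> ->; rewrite in_fsetU ?fset21 ?t1c ?orbT.
have Eac_shift : TT S [fset a * (a * b)^-1; c * (a * b)^-1].
  split; first by rewrite -rtrans_fset2 card_rtrans; case: Eac.
  exists t'; split => //; apply/fsubsetP => x /fset2P[] ->; apply: (fsubsetP sub').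
    by rewrite (edge_commute Eab) invgM mulVKg in_fsetU fset22.
  by rewrite in_fsetU -[_ \in t2]mem_rtrans -Et1 t1c orbT.
case: (edge_shift_cases Eac Eac_shift) => [/eqP | /invg_inj].
  rewrite invg_eq1 => /eqP /mulg1_eq Eb.
  by rewrite -Eb in Eab; apply: no_inverse_edge Eab.
by rewrite -(edge_commute Eac) => /mulgI Ebc; rewrite -Ebc fset22 in cNab.
Qed.

Variables (g a b : G).
Hypothesis Eab : TT S [fset a; b].

Let comm_ab : a * b = b * a := edge_commute Eab.

Let hat_ab : edge_hat [fset a; b] = a * b.
Proof.
apply: edge_hat_fset2 comm_ab.
by have [] := Eab; rewrite cardfs2; case: (a != b).
Qed.

Lemma zig_nbr_walk_adj w :
  zig_nbr S (g, [fset a; b]) w -> walk_adj (Sc S) (Emap (g, [fset a; b])) (Emap w).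
Proof.
case: w => h t; rewrite /zig_nbr /Emap /= => -[[-> L] | [-> L]].
  exact: walk_adj_Sc_rtrans.
rewrite hat_ab -{1}(rtrans_fset2_inv_hat comm_ab) rtransM.
by apply: walk_adj_Sc_rtrans; rewrite -edge_inv_fset2.
Qed.

Lemma zig_nbr_Emap_inj w w' :
  zig_nbr S (g, [fset a; b]) w -> zig_nbr S (g, [fset a; b]) w' ->
  Emap w = Emap w' -> w = w'.
Proof.
case: w w' => [h t] [h' t']; rewrite /zig_nbr /Emap /= hat_ab edge_inv_fset2.
case=> -[-> L] [] [-> L'] E.
- by rewrite (rtrans_inj E).
- case: (red_blue_images_disjoint Eab L L').
  by apply: (@rtrans_inj _ g); rewrite rtransM.
- case: (red_blue_images_disjoint Eab L' L).
  by apply: (@rtrans_inj _ g); rewrite rtransM.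
- by rewrite (rtrans_inj E).
Qed.

Lemma walk_adj_Emap_zig_nbr e :
  walk_adj (Sc S) (Emap (g, [fset a; b])) e ->
  exists w, zig_nbr S (g, [fset a; b]) w /\ Emap w = e.
Proof.
rewrite /Emap /= => /walk_adj_Sc_untranslate [h]; rewrite rtransM => L.
have Eab_shift : TT S [fset a * (g * h); b * (g * h)].
  by rewrite -rtrans_fset2; case: L.
case: (edge_shift_cases Eab Eab_shift) => shift.
  exists (g, rtrans e h); split; first by left; rewrite shift rtrans1 in L.
  by rewrite /Emap /= rtransM -(mulg1_eq shift) mulVg rtrans1.
exists (h^-1, rtrans e h); split; last by rewrite /Emap /= rtransK.
right; split => /=.
  by rewrite hat_ab -[h](mulKg g) shift invgM !invgK comm_ab.
rewrite shift -comm_ab -{1}(rtrans_fset2_inv_hat comm_ab) rtransK in L.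
by rewrite edge_inv_fset2.
Qed.

End CommutativeTripletStructure.

Theorem mainTheorem9 (G : groupType) (S : {fset {fset G}})
  (HS : is_2complex S) (HC : comm_triplet_structure S)
  (v : G * {fset G}) (Hv : TT S v.2) :
  [/\ (forall w, zig_nbr S v w -> walk_adj (Sc S) (Emap v) (Emap w)),
      (forall w w', zig_nbr S v w -> zig_nbr S v w' -> Emap w = Emap w' -> w = w') &
      (forall e, walk_adj (Sc S) (Emap v) e -> exists w, zig_nbr S v w /\ Emap w = e)].
Proof.
case: HC => [[no_inverse_edge _ edge_commute _ edge_quotient_rigid] _].
case: v Hv => g tau /= Etau.
have [a [b Eab]] := fset_card2 Etau.1; subst tau.
split.
- exact: zig_nbr_walk_adj.
- exact: zig_nbr_Emap_inj.
- exact: walk_adj_Emap_zig_nbr.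
Qed.
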